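(* Suppose $(X,y)$ is orthogonal separable and $\lambda\in\mathbb R^N$ satisfies $\mathrm{diag}(y)\lambda\ge0$. Let $\hat D_0$ be an $N\times N$ diagonal $0/1$ matrix with $u_0=X^T\hat D_0\lambda$ and $\|u_0\|_2\le1$. Then for every diagonal $0/1$ matrix $D_j$ with $\hat D_0-D_j\ge0$ we have $\|X^TD_j\lambda\|_2\le\|u_0\|_2\le1$; consequently, if $D_j\in\mathcal P$, then $\max_{\|u\|_2\le1,\ (2D_j-I)Xu\ge0}\lambda^TD_jXu\le1$.
   Context: $X\in\mathbb R^{N\times d}$ rows $x_n$, $y\in\{\pm1\}^N$. Orthogonal separable: $x_n^Tx_{n'}>0$ if $y_n=y_{n'}$ and $x_n^Tx_{n'}\le0$ if $y_n\ne y_{n'}$. $\mathcal P=\{\mathrm{diag}(\mathbb I(Xw\ge0)):w\in\mathbb R^d\}$. Inequalities between vectors/diagonal matrices are entrywise. *)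

From HB Require Import structures.
From mathcomp Require Import all_boot all_order all_algebra.
Set Implicit Arguments. Unset Strict Implicit. Unset Printing Implicit Defensive.
Import Order.TTheory GRing.Theory Num.Theory.
Local Open Scope ring_scope.

Section Defs.
Variable R : rcfType.

Definition norm2 (n : nat) (v : 'cV[R]_n) : R :=
  Num.sqrt (\sum_(i < n) v i 0 ^+ 2).

Definition is_label (N : nat) (y : 'cV[R]_N) : Prop :=
  forall i, y i 0 = 1 \/ y i 0 = -1.

Definition orth_separable (N d : nat) (X : 'M[R]_(N, d)) (y : 'cV[R]_N) : Prop :=
  forall n n' : 'I_N,
    (y n 0 = y n' 0 -> 0 < (row n X *m (row n' X)^T) 0 0) /\
    (y n 0 <> y n' 0 -> (row n X *m (row n' X)^T) 0 0 <= 0).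

Definition diag01 (N : nat) (D : 'M[R]_N) : Prop :=
  forall i j, (i != j -> D i j = 0) /\ (D i i = 0 \/ D i i = 1).

Definition mx_nonneg (m n : nat) (A : 'M[R]_(m, n)) : Prop :=
  forall i j, 0 <= A i j.

Definition in_patterns (N d : nat) (X : 'M[R]_(N, d)) (D : 'M[R]_N) : Prop :=
  exists w : 'cV[R]_d,
    D = diag_mx (\row_i (if 0 <= (X *m w) i 0 then (1 : R) else 0)).
End Defs.

From HB Require Import structures.
From mathcomp Require Import all_boot all_order all_algebra.
From mathcomp Require Import ring lra.
Import Order.TTheory GRing.Theory Num.Theory.
Local Open Scope ring_scope.

(** Split [D0 lam = Dj lam + (D0 - Dj) lam].  By orthogonal separability and
    [y_i lam_i >= 0], every product [lam_i lam_j <x_i, x_j>] is nonnegative, so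
    the two vectors [X^T Dj lam] and [X^T (D0 - Dj) lam] have nonnegative inner
    product, and adding the second one can only increase the norm of the first.
    The last claim is Cauchy-Schwarz, in the form [a.u <= (|a|^2 + |u|^2) / 2];
    it holds for every unit [u]. *)

Section Norm.
Variable R : rcfType.

Lemma sum_sqr_addr n (v w : 'cV[R]_n) :
  \sum_k (v + w) k 0 ^+ 2 =
  \sum_k v k 0 ^+ 2 + 2 * \sum_k v k 0 * w k 0 + \sum_k w k 0 ^+ 2.
Proof.
rewrite mulr_sumr -!big_split /=; apply: eq_bigr => k _; rewrite mxE; ring.
Qed.

Lemma norm2_le_addr n (v w : 'cV[R]_n) :
  0 <= \sum_k v k 0 * w k 0 -> norm2 v <= norm2 (v + w).
Proof.
move=> vw_ge0; rewrite /norm2 ler_sqrt; last by apply: sumr_ge0 => k _; exact: sqr_ge0.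
rewrite sum_sqr_addr -addrA lerDl addr_ge0 ?mulr_ge0 //.
by apply: sumr_ge0 => k _; exact: sqr_ge0.
Qed.

Lemma norm2_le1 n (v : 'cV[R]_n) : norm2 v <= 1 -> \sum_k v k 0 ^+ 2 <= 1.
Proof. by rewrite /norm2 -{1}sqrtr1 ler_sqrt. Qed.

Lemma dotmx_le1 n (a u : 'cV[R]_n) :
  norm2 a <= 1 -> norm2 u <= 1 -> (a^T *m u) 0 0 <= 1.
Proof.
move=> /norm2_le1 a_le1 /norm2_le1 u_le1; rewrite mxE.
apply: (@le_trans _ _ (\sum_k (a k 0 ^+ 2 + u k 0 ^+ 2) / 2)).
  apply: ler_sum => k _; rewrite mxE.
  by have := sqr_ge0 (a k 0 - u k 0); rewrite !expr2 => h; lra.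
by rewrite -mulr_suml big_split /=; lra.
Qed.

End Norm.

Section Diag01.
Variables (R : rcfType) (N : nat) (D : 'M[R]_N).
Hypothesis D01 : diag01 D.

Lemma diag01_mulmx (v : 'cV[R]_N) i : (D *m v) i 0 = D i i * v i 0.
Proof.
rewrite mxE (bigD1 i) //= big1 ?addr0 // => j ji.
by rewrite (D01 i j).1 ?mul0r // eq_sym.
Qed.

Lemma diag01_ge0 i : 0 <= D i i.
Proof. by case: (D01 i i).2 => ->. Qed.

Lemma diag01_tr : D^T = D.
Proof.
apply/matrixP => i j; rewrite mxE; case: (eqVneq i j) => [-> //|ij].
by rewrite (D01 i j).1 // (D01 j i).1 // eq_sym.
Qed.

End Diag01.

Lemma diag01_subr (R : rcfType) N (D0 Dj : 'M[R]_N) :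
  diag01 D0 -> diag01 Dj -> mx_nonneg (D0 - Dj) -> diag01 (D0 - Dj).
Proof.
move=> D0_01 Dj_01 ge0 i j; split=> [ij|].
  by rewrite !mxE (D0_01 i j).1 // (Dj_01 i j).1 // subr0.
have := ge0 i i; rewrite !mxE.
by case: (D0_01 i i).2 => ->; case: (Dj_01 i i).2 => ->; rewrite ?subrr; lra.
Qed.

Section Gram.
Variables (R : rcfType) (N d : nat) (X : 'M[R]_(N, d)).

Local Notation gram i j := ((row i X *m (row j X)^T) 0 0).

Lemma dot_mulmx_gram (c e : 'cV[R]_N) :
  \sum_k (X^T *m c) k 0 * (X^T *m e) k 0 =
  \sum_i \sum_j c i 0 * e j 0 * gram i j.
Proof.
transitivity (\sum_k \sum_i \sum_j X i k * c i 0 * (X j k * e j 0)).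
  apply: eq_bigr => k _; rewrite !mxE big_distrl; apply: eq_bigr => i _.
  by rewrite !mxE big_distrr /=; apply: eq_bigr => j _; rewrite !mxE.
rewrite exchange_big; apply: eq_bigr => i _; rewrite exchange_big.
apply: eq_bigr => j _; rewrite !mxE big_distrr; apply: eq_bigr => k _.
by rewrite !mxE -[RHS]/(c i 0 * e j 0 * (X i k * X j k)); ring.
Qed.

Lemma orth_separable_label_gram_ge0 (y : 'cV[R]_N) i j :
  is_label y -> orth_separable X y -> 0 <= y i 0 * y j 0 * gram i j.
Proof.
move=> y_lab sep; have [same_gt0 diff_le0] := sep i j.
case: (y_lab i) => yi; case: (y_lab j) => yj; rewrite yi yj in same_gt0 diff_le0 *.
- by rewrite !mul1r ltW ?same_gt0.
- by rewrite mul1r mulN1r oppr_ge0 diff_le0 // => h; lra.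
- by rewrite mulr1 mulN1r oppr_ge0 diff_le0 // => h; lra.
- by rewrite mulrNN !mul1r ltW ?same_gt0.
Qed.

(* Since [y_i^2 = 1], [lam_i lam_j G_ij = (y_i lam_i) (y_j lam_j) (y_i y_j G_ij)]. *)
Lemma orth_separable_gram_ge0 (y lam : 'cV[R]_N) i j :
  is_label y -> orth_separable X y ->
  (forall k, 0 <= y k 0 * lam k 0) -> 0 <= lam i 0 * lam j 0 * gram i j.
Proof.
move=> y_lab sep ylam_ge0.
have y_sq k : y k 0 * y k 0 = 1 by case: (y_lab k) => ->; rewrite ?mulrNN mul1r.
have -> : lam i 0 * lam j 0 * gram i j =
    (y i 0 * lam i 0) * (y j 0 * lam j 0) * (y i 0 * y j 0 * gram i j).
  rewrite -[LHS]mul1r -(mul1r 1) -{1}(y_sq i) -(y_sq j); ring.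
apply: mulr_ge0; first exact: mulr_ge0.
exact: orth_separable_label_gram_ge0.
Qed.

Lemma dot_diag01_mulmx_ge0 (D E : 'M[R]_N) (lam : 'cV[R]_N) :
  diag01 D -> diag01 E -> (forall i j, 0 <= lam i 0 * lam j 0 * gram i j) ->
  0 <= \sum_k (X^T *m (D *m lam)) k 0 * (X^T *m (E *m lam)) k 0.
Proof.
move=> D01 E01 gram_ge0; rewrite dot_mulmx_gram.
apply: sumr_ge0 => i _; apply: sumr_ge0 => j _.
rewrite !diag01_mulmx //.
have -> : D i i * lam i 0 * (E j j * lam j 0) * gram i j =
          D i i * E j j * (lam i 0 * lam j 0 * gram i j) by ring.
by apply: mulr_ge0 => //; apply: mulr_ge0; exact: diag01_ge0.
Qed.

End Gram.

Theorem lemma6 (R : rcfType) (N d : nat) (X : 'M[R]_(N, d)) (y : 'cV[R]_N)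
  (lam : 'cV[R]_N) (D0 : 'M[R]_N) :
  is_label y ->
  orth_separable X y ->
  mx_nonneg (diag_mx y^T *m lam) ->
  diag01 D0 ->
  norm2 (X^T *m D0 *m lam) <= 1 ->
  forall Dj : 'M[R]_N, diag01 Dj -> mx_nonneg (D0 - Dj) ->
    (norm2 (X^T *m Dj *m lam) <= norm2 (X^T *m D0 *m lam) /\
     norm2 (X^T *m D0 *m lam) <= 1) /\
    (in_patterns X Dj ->
     forall u : 'cV[R]_d, norm2 u <= 1 ->
       mx_nonneg (((2 : R) *: Dj - 1%:M) *m X *m u) ->
       (lam^T *m Dj *m X *m u) 0 0 <= 1).
Proof.
move=> y_lab sep ylam_ge0 D0_01 u0_le1 Dj Dj_01 D0Dj_ge0.
have gram_ge0 i j : 0 <= lam i 0 * lam j 0 * (row i X *m (row j X)^T) 0 0.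
  apply: orth_separable_gram_ge0 y_lab sep _ => k.
  by have := ylam_ge0 k 0; rewrite mul_diag_mx !mxE.
have norm_le : norm2 (X^T *m Dj *m lam) <= norm2 (X^T *m D0 *m lam).
  have -> : X^T *m D0 *m lam = X^T *m (Dj *m lam) + X^T *m ((D0 - Dj) *m lam).
    by rewrite -mulmxDr -mulmxDl addrC subrK mulmxA.
  rewrite -mulmxA; apply: norm2_le_addr.
  by apply: dot_diag01_mulmx_ge0 => //; exact: diag01_subr.
split=> [|_ u u_le1 _]; first by split.
have -> : lam^T *m Dj *m X *m u = (X^T *m Dj *m lam)^T *m u.
  by rewrite !trmx_mul trmxK diag01_tr // !mulmxA.
exact: dotmx_le1 (le_trans norm_le u0_le1) u_le1.
Qed.
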